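(* Let $(X,\|\cdot\|)$ be a normed linear space, let $I$ be a non-trivial admissible ideal in $\mathbb{N}$, let $x=\{x_k\}_{k\in\mathbb{N}}$ be a sequence in $X$ and let $r>0$. Then $\operatorname{diam}(I\text{-}st\text{-}\mathrm{LIM}_x^r)\le 2r$. In particular, if $x$ is $I$-statistically convergent to $\xi\in X$, then $I\text{-}st\text{-}\mathrm{LIM}_x^r\supset \overline{B_r(\xi)}=\{y\in X:\|y-\xi\|\le r\}$, and so $\operatorname{diam}(I\text{-}st\text{-}\mathrm{LIM}_x^r)=2r$.
   Context: An ideal $I$ in $\mathbb{N}$ is a family of subsets of $\mathbb{N}$ containing $\emptyset$, closed under finite unions and under taking subsets; it is non-trivial if $\mathbb{N}\notin I$ and admissible if $\{n\}\in I$ for every $n\in\mathbb{N}$. A sequence $x=\{x_k\}$ in $X$ is $I$-statistically convergent to $\xi$ if for every $\varepsilon>0$ and $\delta>0$, $\{n\in\mathbb{N}:\frac1n|\{k\le n:\|x_k-\xi\|\ge\varepsilon\}|\ge\delta\}\in I$. For $r\ge 0$, $x$ is rough $I$-statistically convergent (or $r$-$I$-statistically convergent) to $\xi$ if for every $\varepsilon>0$ and $\delta>0$, $\{n\in\mathbb{N}:\frac1n|\{k\le n:\|x_k-\xi\|\ge r+\varepsilon\}|\ge\delta\}\in I$. $I\text{-}st\text{-}\mathrm{LIM}_x^r$ denotes the set of all $\xi\in X$ to which $x$ is $r$-$I$-statistically convergent. *)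

From HB Require Import structures.
From mathcomp Require Import all_boot all_order all_algebra.
From mathcomp Require Import all_classical all_reals all_analysis.
Set Implicit Arguments. Unset Strict Implicit. Unset Printing Implicit Defensive.
Import Order.TTheory GRing.Theory Num.Theory.
Import numFieldNormedType.Exports.
Local Open Scope classical_set_scope.
Local Open Scope ring_scope.

Definition is_ideal (I : set (set nat)) : Prop :=
  [/\ I set0,
      (forall A B, I A -> I B -> I (A `|` B)) &
      (forall A B, B `<=` A -> I A -> I B)].

Definition nontrivial_ideal (I : set (set nat)) : Prop := ~ I setT.

Definition admissible_ideal (I : set (set nat)) : Prop :=
  forall n : nat, I [set n].

(* Paper's N = {1,2,...} is identified with nat via n' = n.+1 (and k' = k.+1):
   the paper's (1/n') |{k' <= n' : P}| becomes (1/(n+1)) #|{k < n+1 : P}|. *)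
Definition st_dens {R : realType} (P : nat -> bool) (n : nat) : R :=
  (#|[set k : 'I_n.+1 | P k]|)%:R / (n.+1)%:R.

Definition rough_I_st_conv {R : realType} {X : normedModType R}
  (I : set (set nat)) (x : nat -> X) (r : R) (xi : X) : Prop :=
  forall eps delta : R, 0 < eps -> 0 < delta ->
    I [set n | delta <= st_dens (fun k => r + eps <= `|x k - xi|) n].

Definition I_st_conv {R : realType} {X : normedModType R}
  (I : set (set nat)) (x : nat -> X) (xi : X) : Prop :=
  forall eps delta : R, 0 < eps -> 0 < delta ->
    I [set n | delta <= st_dens (fun k => eps <= `|x k - xi|) n].

Definition I_st_LIM {R : realType} {X : normedModType R}
  (I : set (set nat)) (x : nat -> X) (r : R) : set X :=
  [set xi | rough_I_st_conv I x r xi].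

(* diameter, as an extended real (sup of distances; -oo for the empty set) *)
Definition diam {R : realType} {X : normedModType R} (A : set X) : \bar R :=
  ereal_sup [set (`|y - z|)%:E | y in A & z in A].

From HB Require Import structures.
From mathcomp Require Import all_boot all_order all_algebra.
From mathcomp Require Import all_classical all_reals all_analysis.
From mathcomp Require Import lra.
Set Implicit Arguments.
Unset Strict Implicit.
Unset Printing Implicit Defensive.
Import Order.TTheory GRing.Theory Num.Theory.
Import numFieldNormedType.Exports.
Local Open Scope classical_set_scope.
Local Open Scope ring_scope.

(* If x were r-I-statistically convergent to y and z with ||y - z|| > 2r, put
   eps := (||y - z|| - 2r) / 2.  By the triangle inequality every x_k is at
   distance at least r + eps from y or from z, so for every n one of the two
   densities is at least 1/2: the two sets of n where the density is at least
   1/2 lie in I and cover N, contradicting the non-triviality of I.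
   Moreover, if x is I-statistically convergent to xi, the triangle
   inequality ||x_k - y|| <= ||x_k - xi|| + ||y - xi|| makes every y of the
   closed ball of radius r around xi an r-rough limit, and that ball has
   diameter 2r as soon as X is not the zero space. *)

Section StatisticalDensity.
Variable R : realType.
Implicit Types (P Q : nat -> bool) (n : nat).

Lemma st_densE P n :
  st_dens P n = #|[pred k : 'I_n.+1 | P k]|%:R / n.+1%:R :> R.
Proof.
by congr (_%:R / _); apply: eq_card => k; apply/idP/idP; rewrite in_setE.
Qed.

Lemma le_st_dens P Q n :
  (forall k, P k -> Q k) -> st_dens P n <= st_dens Q n :> R.
Proof.
move=> PQ; rewrite !st_densE ler_wpM2r ?invr_ge0 // ler_nat.
by apply: subset_leq_card; apply/fintype.subsetP => k; apply: PQ.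
Qed.

Lemma st_dens_predU P Q n :
  st_dens (fun k => P k || Q k) n <= st_dens P n + st_dens Q n :> R.
Proof.
rewrite !st_densE -mulrDl ler_wpM2r ?invr_ge0 // -natrD ler_nat.
rewrite -(cardUI [pred k : 'I_n.+1 | P k] [pred k : 'I_n.+1 | Q k]).
apply: leq_trans (leq_addr _ _).
by apply: subset_leq_card; apply/fintype.subsetP.
Qed.

Lemma st_dens_predT n : st_dens (fun=> true) n = 1 :> R.
Proof. by rewrite st_densE cardT size_enum_ord divff. Qed.

Lemma st_dens_cover P Q n :
  (forall k, P k || Q k) -> 1 <= st_dens P n + st_dens Q n :> R.
Proof.
by move=> PQ; rewrite -(st_dens_predT n); apply: le_trans (st_dens_predU P Q n);
  apply: le_st_dens.
Qed.

End StatisticalDensity.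

Lemma nontrivial_ideal_st_dens_cover {R : realType} {I : set (set nat)}
    {P Q : nat -> bool} :
  is_ideal I -> nontrivial_ideal I -> (forall k, P k || Q k) ->
  I [set n | 2^-1 <= st_dens P n :> R] ->
  ~ I [set n | 2^-1 <= st_dens Q n :> R].
Proof.
move=> [_ IU _] NT PQ IP IQ; apply: NT.
congr I: (IU _ _ IP IQ); apply/seteqP; split=> // n _ /=.
have := st_dens_cover R n PQ.
by have [|] := lerP 2^-1 (st_dens P n : R); [left | right; lra].
Qed.

Section RoughLimits.
Variables (R : realType) (X : normedModType R).
Variables (I : set (set nat)) (x : nat -> X).
Hypothesis I_ideal : is_ideal I.

Lemma I_st_convE xi : I_st_conv I x xi <-> rough_I_st_conv I x 0 xi.
Proof.
by split=> conv eps delta eps0 delta0; have := conv _ _ eps0 delta0;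
  rewrite add0r.
Qed.

Lemma rough_I_st_conv_shift r s xi y :
  rough_I_st_conv I x r xi -> `|y - xi| <= s -> rough_I_st_conv I x (r + s) y.
Proof.
case: I_ideal => _ _ I_sub conv y_xi eps delta eps0 delta0.
apply: I_sub (conv eps delta eps0 delta0) => n /= /le_trans; apply.
apply: le_st_dens => k; have := ler_distD xi (x k) y; rewrite (distrC xi y).
lra.
Qed.

Lemma rough_I_st_conv_dist_le r y z :
  nontrivial_ideal I ->
  rough_I_st_conv I x r y -> rough_I_st_conv I x r z -> `|y - z| <= 2 * r.
Proof.
move=> NT conv_y conv_z; rewrite leNgt; apply/negP => gt_yz.
pose eps := (`|y - z| - 2 * r) / 2.
have eps0 : 0 < eps by rewrite divr_gt0 // subr_gt0.
have yz_eps : `|y - z| = 2 * (r + eps) by rewrite /eps; lra.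
have half0 : 0 < 2^-1 :> R by rewrite invr_gt0.
apply: (nontrivial_ideal_st_dens_cover I_ideal NT _
  (conv_y eps _ eps0 half0) (conv_z eps _ eps0 half0)) => k.
apply/negPn/negP; rewrite negb_or -!ltNge => /andP[near_y near_z].
have := ler_distD (x k) y z; rewrite (distrC y (x k)); lra.
Qed.

End RoughLimits.

Section Diameter.
Variables (R : realType) (X : normedModType R).

Lemma diam_le (A : set X) d :
  (forall y z, A y -> A z -> `|y - z| <= d) -> (diam A <= d%:E)%E.
Proof.
by move=> Ad; apply: ge_ereal_sup => _ [y Ay [z Az <-]]; rewrite lee_fin Ad.
Qed.

Lemma diam_ge (A : set X) y z : A y -> A z -> (`|y - z|%:E <= diam A)%E.
Proof. by move=> Ay Az; apply: ereal_sup_ubound; exists y => //; exists z. Qed.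

Lemma exists_norm_eq r :
  0 <= r -> (exists v : X, v != 0) -> exists u : X, `|u| = r.
Proof.
move=> r0 [v v0]; exists ((r / `|v|) *: v).
by rewrite normrZ ger0_norm ?divr_ge0 // divfK ?normr_eq0.
Qed.

Lemma le_diam (A B : set X) : A `<=` B -> (diam A <= diam B)%E.
Proof.
move=> AB; apply: le_ereal_sup => _ [y Ay [z Az <-]].
by exists y; [exact: AB | exists z => //; exact: AB].
Qed.

Lemma diam_closed_ball_ge (xi : X) r : 0 <= r -> (exists v : X, v != 0) ->
  ((2 * r)%:E <= diam [set y | (`|y - xi| <= r)%R])%E.
Proof.
move=> r0 /(exists_norm_eq r0)[u nu].
have -> : 2 * r = `|(xi + u) - (xi - u)|.
  by rewrite opprB addrC addrA subrK -mulr2n normrMn nu mulr_natl.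
by apply: diam_ge; rewrite /= addrAC subrr add0r ?normrN nu.
Qed.

End Diameter.

Theorem theorem3p1 (R : realType) (X : normedModType R)
  (I : set (set nat)) (x : nat -> X) (r : R) :
  is_ideal I -> nontrivial_ideal I -> admissible_ideal I -> 0 < r ->
  (diam (I_st_LIM I x r) <= (2 * r)%:E)%E /\
  (forall xi : X, I_st_conv I x xi ->
     [set y : X | `|y - xi| <= r] `<=` I_st_LIM I x r /\
     ((exists v : X, v != 0) -> diam (I_st_LIM I x r) = (2 * r)%:E)).
Proof.
move=> I_ideal NT _ r0.
have diam_LIM : (diam (I_st_LIM I x r) <= (2 * r)%:E)%E.
  by apply: diam_le => y z; apply: rough_I_st_conv_dist_le.
split=> // xi /I_st_convE conv_xi.
have ball_LIM : [set y : X | `|y - xi| <= r] `<=` I_st_LIM I x r.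
  by move=> y y_xi; rewrite -[r]add0r; exact: rough_I_st_conv_shift y_xi.
split=> // X_nontriv; apply/le_anti; rewrite diam_LIM /=.
apply: le_trans (le_diam ball_LIM).
exact: diam_closed_ball_ge (ltW r0) X_nontriv.
Qed.
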